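(* Let $\tau=\{1-t^2+2it:\ t\in\mathbb{R}\}$ (a parabola). Then: (1) $A\mapsto\zeta_+(A)$ is a conformal mapping of $\mathbb{C}_+=\{\Im A>0\}$ onto the domain in $\mathbb{C}_+$ bounded by the ray $[1,+\infty)$ and by $\tau\cap\mathbb{C}_+$; under this mapping the boundary part $[-1,+\infty)$ corresponds to $[1,+\infty)$ and $(-\infty,-1)$ corresponds to $\tau\cap\mathbb{C}_+$. (2) $A\mapsto\zeta_-(A)$ is a conformal mapping of $\mathbb{C}_+$ onto the domain in $\mathbb{C}$ bounded by the ray $[0,+\infty)$ and by $\tau\cap\mathbb{C}_-$ (where $\mathbb{C}_-=\{\Im z<0\}$); under this mapping the boundary part $(0,+\infty)$ corresponds to itself, the interval $[-1,0]$ corresponds to $[0,1]$, and $(-\infty,0)$ corresponds to $\tau\cap\mathbb{C}_-$. Moreover, the pre-image of the negative real axis $(-\infty,0)$ under $\zeta_-$ is the parabola in the upper $A$-half-plane given parametrically by $\{-t^2+2it:\ t\ge0\}$.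
   Context: For $A$ with $\Im A\ge 0$, $\zeta_\pm(A)=A+2\pm2\sqrt{A+1}=(1\pm\sqrt{A+1})^2$, where $\sqrt{\cdot}$ is the principal branch of the square root. Boundary correspondences are understood in the sense of the continuous extension of the maps to the boundary. *)

From Stdlib Require Import Reals.
From Coquelicot Require Import Coquelicot.
Open Scope R_scope.

Notation CC := Complex.C.

(* Principal branch of the complex square root:
   Re (Csqrt z) >= 0, and Im (Csqrt z) >= 0 whenever Re (Csqrt z) = 0
   (i.e. arg (Csqrt z) in (-pi/2, pi/2]). *)
Definition Csqrt (z : CC) : CC :=
  let r := Cmod z in
  (sqrt ((r + Re z) / 2),
   (if Rlt_dec (Im z) 0 then -1 else 1) * sqrt ((r - Re z) / 2)).

Definition zeta_plus (A : CC) : CC :=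
  Cplus (Cplus A (RtoC 2)) (Cmult (RtoC 2) (Csqrt (Cplus A (RtoC 1)))).
Definition zeta_minus (A : CC) : CC :=
  Cminus (Cplus A (RtoC 2)) (Cmult (RtoC 2) (Csqrt (Cplus A (RtoC 1)))).

Definition tau (z : CC) : Prop := exists t : R, z = (1 - t ^ 2, 2 * t).

Definition Cupper (z : CC) : Prop := 0 < Im z.
Definition Cupper_closed (z : CC) : Prop := 0 <= Im z.
Definition Clower (z : CC) : Prop := Im z < 0.

Definition holomorphic_on (U : CC -> Prop) (f : CC -> CC) : Prop :=
  forall z, U z -> @ex_derive C_AbsRing C_NormedModule f z.

Definition bij_onto (f : CC -> CC) (S T : CC -> Prop) : Prop :=
  (forall z, S z -> T (f z)) /\
  (forall w, T w -> exists z, S z /\ f z = w) /\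
  (forall z1 z2, S z1 -> S z2 -> f z1 = f z2 -> z1 = z2).

(* Conformal mapping of U onto D: a holomorphic bijection of U onto D
   (its inverse is then automatically holomorphic). *)
Definition conformal_onto (f : CC -> CC) (U D : CC -> Prop) : Prop :=
  holomorphic_on U f /\ bij_onto f U D.

(* f (defined on the closed upper half-plane) is continuous there, i.e. it is
   the continuous extension to the boundary of its restriction to C_+. *)
Definition continuous_on_closed_upper (f : CC -> CC) : Prop :=
  forall z, Cupper_closed z ->
    filterlim f (within Cupper_closed (locally z)) (locally (f z)).

Definition real_set (P : R -> Prop) (z : CC) : Prop := Im z = 0 /\ P (Re z).

(* Domain in C_+ bounded by the ray [1,+oo) and tau /\ C_+ :
   the points of C_+ lying to the right of the parabola
   tau = { x + i y : x = 1 - y^2/4 }. *)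
Definition D_plus (z : CC) : Prop :=
  0 < Im z /\ 1 - (Im z) ^ 2 / 4 < Re z.

(* Domain in C bounded by the ray [0,+oo) and tau /\ C_- :
   C minus ( [0,+oo) union the closed region of C_- to the right of tau ). *)
Definition D_minus (z : CC) : Prop :=
  ~ (Im z = 0 /\ 0 <= Re z) /\
  ~ (Im z < 0 /\ 1 - (Im z) ^ 2 / 4 <= Re z).

From Stdlib Require Import Reals Lra Psatz.
From Coquelicot Require Import Coquelicot.
Open Scope R_scope.

(* Write [A + 1 = s^2] with [s = sqrt (A + 1)] in the closed first quadrant;
   then [zeta_+(A) = (1 + s)^2] and [zeta_-(A) = (s - 1)^2], so everything is
   a statement about the squaring map [csq].  Squaring is injective on every
   open half-plane through 0, and it sends the line [Re s = 1] onto the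
   parabola tau, the half-plane [Re s > 1] onto the region right of tau:
   [Re (s^2) - (1 - Im (s^2)^2 / 4) = ((Re s)^2 - 1) (1 + (Im s)^2)].
   Holomorphy comes from the differentiability of [Csqrt] off its cut, and
   continuity up to the real axis from its 1/2-Hölder bound on the closed
   upper half-plane. *)

Definition csq (p q : R) : CC := (p * p - q * q, 2 * p * q).

Definition csq_sub1 (a b : R) : CC := (a * a - b * b - 1, 2 * a * b).

Lemma csq_opp p q : csq (- p) (- q) = csq p q.
Proof. unfold csq; f_equal; ring. Qed.

Lemma csq_eq_cases p1 q1 p2 q2 : csq p1 q1 = csq p2 q2 ->
  (p1 = p2 /\ q1 = q2) \/ (p1 = - p2 /\ q1 = - q2).
Proof.
  unfold csq; intros E; injection E as E1 E2.
  assert (Hprod : Cmult (Cminus (p1, q1) (p2, q2)) (Cplus (p1, q1) (p2, q2)) = RtoC 0).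
  { unfold Cmult, Cminus, Cplus, Copp, RtoC; simpl; f_equal; nra. }
  apply (f_equal Cmod) in Hprod; rewrite Cmod_mult, Cmod_0 in Hprod.
  destruct (Rmult_integral _ _ Hprod) as [H | H]; apply Cmod_eq_0 in H;
    unfold Cminus, Cplus, Copp in H; simpl in H; injection H as H1 H2.
  - left; lra.
  - right; lra.
Qed.

Lemma csq_parabola_gap p q :
  Re (csq p q) - (1 - Im (csq p q) ^ 2 / 4) = (p * p - 1) * (1 + q * q).
Proof. unfold csq, Re, Im; simpl; field. Qed.

Lemma csq_right_of_parabola p q :
  1 - Im (csq p q) ^ 2 / 4 < Re (csq p q) <-> 1 < p * p.
Proof.
  pose proof (csq_parabola_gap p q); pose proof (Rle_0_sqr q); unfold Rsqr in *.
  split; intros H'; [destruct (Rlt_le_dec 1 (p * p)) |]; nra.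
Qed.

Lemma csq_on_or_right_of_parabola p q :
  1 - Im (csq p q) ^ 2 / 4 <= Re (csq p q) <-> 1 <= p * p.
Proof.
  pose proof (csq_parabola_gap p q); pose proof (Rle_0_sqr q); unfold Rsqr in *.
  split; intros H'; [destruct (Rle_lt_dec 1 (p * p)) |]; nra.
Qed.

Lemma tau_csq z : tau z <-> exists t, z = csq 1 t.
Proof.
  unfold tau, csq; split; intros [t ->]; exists t; f_equal; ring.
Qed.

Lemma Csqrt_spec w :
  csq (Re (Csqrt w)) (Im (Csqrt w)) = w /\ 0 <= Re (Csqrt w) /\
  (0 <= Im w -> 0 <= Im (Csqrt w)).
Proof.
  destruct w as [x y]; unfold Csqrt, Cmod, csq, Re, Im; cbn [fst snd].
  set (r := sqrt (x ^ 2 + y ^ 2)).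
  assert (Hr : r * r = x ^ 2 + y ^ 2) by (apply sqrt_sqrt; nra).
  assert (Hr0 : 0 <= r) by apply sqrt_pos.
  assert (Hu : 0 <= (r + x) / 2) by nra.
  assert (Hv : 0 <= (r - x) / 2) by nra.
  pose proof (sqrt_sqrt _ Hu) as Su; pose proof (sqrt_sqrt _ Hv) as Sv.
  pose proof (sqrt_pos ((r + x) / 2)); pose proof (sqrt_pos ((r - x) / 2)).
  set (u := sqrt ((r + x) / 2)) in *; set (v := sqrt ((r - x) / 2)) in *.
  (* [u v] is determined by [(u v)^2 = (r^2 - x^2)/4 = y^2/4] and [u v >= 0] *)
  assert (Huv : u * v = Rabs y / 2).
  { assert (Hy : Rabs y * Rabs y = y * y) by (rewrite <- Rabs_mult; apply Rabs_pos_eq; nra).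
    assert (Hsq : (u * v - Rabs y / 2) * (u * v + Rabs y / 2) = 0).
    { replace ((u * v - Rabs y / 2) * (u * v + Rabs y / 2))
        with ((u * u) * (v * v) - Rabs y * Rabs y / 4) by field.
      rewrite Su, Sv, Hy; nra. }
    pose proof (Rabs_pos y).
    destruct (Rmult_integral _ _ Hsq); nra. }
  destruct (Rlt_dec y 0) as [Hy | Hy].
  - rewrite Rabs_left in Huv by lra.
    split; [f_equal; nra | split; [lra | intros; lra]].
  - rewrite Rabs_right in Huv by lra.
    split; [f_equal; nra | split; [lra | intros; nra]].
Qed.

Lemma Csqrt_csq p q : 0 <= p -> 0 <= q -> Csqrt (csq p q) = (p, q).
Proof.
  intros Hp Hq.
  destruct (Csqrt_spec (csq p q)) as (E & Hp' & Hq').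
  assert (Hq'' : 0 <= Im (Csqrt (csq p q))) by (apply Hq'; simpl; nra).
  destruct (Csqrt (csq p q)) as [p' q']; simpl in *.
  destruct (csq_eq_cases _ _ _ _ E) as [[-> ->] | [-> ->]]; f_equal; lra.
Qed.

Lemma csq_surj w : exists p q, w = csq p q /\ 0 <= p /\ (0 <= Im w -> 0 <= q).
Proof.
  destruct (Csqrt_spec w) as (E & Hp & Hq).
  exists (Re (Csqrt w)), (Im (Csqrt w)); auto.
Qed.

Lemma csq_Cmult p q : csq p q = Cmult (p, q) (p, q).
Proof. unfold csq, Cmult; simpl; f_equal; ring. Qed.

Lemma Csqrt_sqr w : Cmult (Csqrt w) (Csqrt w) = w.
Proof.
  destruct (Csqrt_spec w) as (E & _ & _).
  rewrite csq_Cmult in E; destruct (Csqrt w); exact E.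
Qed.

Lemma Csqrt_Re_pos w : 0 < Im w -> 0 < Re (Csqrt w).
Proof.
  intros Hw; destruct (Csqrt_spec w) as (E & Hp & _).
  destruct (Csqrt w) as [p q]; simpl in *; subst w; simpl in Hw.
  destruct Hp as [Hp | <-]; [exact Hp | lra].
Qed.

Lemma Cupper_closed_csq_sub1 A :
  Cupper_closed A -> exists a b, 0 <= a /\ 0 <= b /\ A = csq_sub1 a b.
Proof.
  unfold Cupper_closed, Im; intros HA.
  destruct (csq_surj (Cplus A (RtoC 1))) as (a & b & E & Ha & Hb).
  exists a, b; split; [exact Ha | split; [apply Hb; simpl; lra |]].
  destruct A as [x y]; unfold csq, csq_sub1, Cplus, RtoC in *; simpl in *.
  injection E as E1 E2; f_equal; lra.
Qed.

Lemma real_ge_csq_sub1 x : -1 <= x -> (x, 0) = csq_sub1 (sqrt (x + 1)) 0.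
Proof.
  intros Hx; pose proof (sqrt_sqrt (x + 1)).
  unfold csq_sub1; f_equal; nra.
Qed.

Lemma real_lt_csq_sub1 x : x < -1 -> (x, 0) = csq_sub1 0 (sqrt (- 1 - x)).
Proof.
  intros Hx; pose proof (sqrt_sqrt (- 1 - x)).
  unfold csq_sub1; f_equal; nra.
Qed.

Lemma real_set_pair P z : real_set P z -> exists x, P x /\ z = (x, 0).
Proof. destruct z as [x y]; intros [Hy Hx]; simpl in *; subst; eauto. Qed.

Lemma zeta_plus_csq_sub1 a b :
  0 <= a -> 0 <= b -> zeta_plus (csq_sub1 a b) = csq (1 + a) b.
Proof.
  intros Ha Hb; unfold zeta_plus.
  replace (Cplus (csq_sub1 a b) (RtoC 1)) with (csq a b)
    by (unfold csq, csq_sub1, Cplus, RtoC; simpl; f_equal; ring).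
  rewrite Csqrt_csq by assumption.
  unfold csq, csq_sub1, Cplus, Cmult, RtoC; simpl; f_equal; ring.
Qed.

Lemma zeta_minus_csq_sub1 a b :
  0 <= a -> 0 <= b -> zeta_minus (csq_sub1 a b) = csq (a - 1) b.
Proof.
  intros Ha Hb; unfold zeta_minus.
  replace (Cplus (csq_sub1 a b) (RtoC 1)) with (csq a b)
    by (unfold csq, csq_sub1, Cplus, RtoC; simpl; f_equal; ring).
  rewrite Csqrt_csq by assumption.
  unfold csq, csq_sub1, Cminus, Copp, Cplus, Cmult, RtoC; simpl; f_equal; ring.
Qed.

Lemma zeta_plus_inj z1 z2 : Cupper_closed z1 -> Cupper_closed z2 ->
  zeta_plus z1 = zeta_plus z2 -> z1 = z2.
Proof.
  intros H1 H2 E.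
  destruct (Cupper_closed_csq_sub1 z1 H1) as (a1 & b1 & Ha1 & Hb1 & ->).
  destruct (Cupper_closed_csq_sub1 z2 H2) as (a2 & b2 & Ha2 & Hb2 & ->).
  rewrite !zeta_plus_csq_sub1 in E by assumption.
  destruct (csq_eq_cases _ _ _ _ E) as [[Ea Eb] | [Ea Eb]];
    [replace a2 with a1 by lra; subst; reflexivity | lra].
Qed.

(* Unlike [zeta_plus], [zeta_minus] identifies [csq_sub1 a 0] with
   [csq_sub1 (2 - a) 0]; the alternatives rule this out. *)
Lemma zeta_minus_csq_sub1_inj a1 b1 a2 b2 :
  0 <= a1 -> 0 <= b1 -> 0 <= a2 -> 0 <= b2 ->
  (0 < b1 /\ 0 < b2) \/ (1 <= a1 /\ 1 <= a2) \/ (a1 <= 1 /\ a2 <= 1) ->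
  zeta_minus (csq_sub1 a1 b1) = zeta_minus (csq_sub1 a2 b2) ->
  csq_sub1 a1 b1 = csq_sub1 a2 b2.
Proof.
  intros Ha1 Hb1 Ha2 Hb2 Hside E.
  rewrite !zeta_minus_csq_sub1 in E by assumption.
  destruct (csq_eq_cases _ _ _ _ E) as [[Ea Eb] | [Ea Eb]].
  - replace a2 with a1 by lra; subst; reflexivity.
  - replace a2 with a1 by lra; replace b2 with b1 by lra; reflexivity.
Qed.

Lemma zeta_plus_upper : bij_onto zeta_plus Cupper D_plus.
Proof.
  split; [| split].
  - intros z Hz.
    destruct (Cupper_closed_csq_sub1 z (Rlt_le _ _ Hz)) as (a & b & Ha & Hb & ->).
    unfold Cupper in Hz; simpl in Hz.
    rewrite zeta_plus_csq_sub1 by assumption.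
    split; [simpl; nra | apply csq_right_of_parabola; nra].
  - intros w [Him Hright]; destruct (csq_surj w) as (p & q & -> & Hp & Hq).
    apply csq_right_of_parabola in Hright; simpl in Him.
    assert (Hq0 : 0 < q) by (destruct (Hq (Rlt_le _ _ Him)); nra).
    exists (csq_sub1 (p - 1) q); split.
    + unfold Cupper; simpl; nra.
    + rewrite zeta_plus_csq_sub1 by nra; f_equal; ring.
  - intros z1 z2 H1 H2; apply zeta_plus_inj; apply Rlt_le; assumption.
Qed.

Lemma zeta_plus_real_ge :
  bij_onto zeta_plus (real_set (fun x => -1 <= x)) (real_set (fun x => 1 <= x)).
Proof.
  split; [| split].
  - intros z Hz; destruct (real_set_pair _ _ Hz) as (x & Hx & ->).
    rewrite real_ge_csq_sub1, zeta_plus_csq_sub1 by (auto using sqrt_pos; lra).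
    pose proof (sqrt_pos (x + 1)).
    split; simpl; nra.
  - intros w Hw; destruct (real_set_pair _ _ Hw) as (x & Hx & ->).
    assert (Hs : 1 <= sqrt x) by (rewrite <- sqrt_1; apply sqrt_le_1_alt; lra).
    pose proof (sqrt_sqrt x).
    exists (csq_sub1 (sqrt x - 1) 0); split.
    + split; simpl; nra.
    + rewrite zeta_plus_csq_sub1 by lra; unfold csq; f_equal; nra.
  - intros z1 z2 [H1 _] [H2 _]; apply zeta_plus_inj; unfold Cupper_closed; lra.
Qed.

Lemma zeta_plus_real_lt :
  bij_onto zeta_plus (real_set (fun x => x < -1)) (fun z => tau z /\ Cupper z).
Proof.
  split; [| split].
  - intros z Hz; destruct (real_set_pair _ _ Hz) as (x & Hx & ->).
    rewrite real_lt_csq_sub1, zeta_plus_csq_sub1 by (auto using sqrt_pos; lra).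
    assert (Ht : 0 < sqrt (- 1 - x)) by (apply sqrt_lt_R0; lra).
    rewrite Rplus_0_r; split; [apply tau_csq; eauto | unfold Cupper; simpl; lra].
  - intros w [Hw Hup]; apply tau_csq in Hw; destruct Hw as [t ->].
    unfold Cupper in Hup; simpl in Hup.
    exists (csq_sub1 0 t); split.
    + split; simpl; nra.
    + rewrite zeta_plus_csq_sub1 by lra; f_equal; ring.
  - intros z1 z2 [H1 _] [H2 _]; apply zeta_plus_inj; unfold Cupper_closed; lra.
Qed.

Lemma zeta_minus_upper : bij_onto zeta_minus Cupper D_minus.
Proof.
  split; [| split].
  - intros z Hz.
    destruct (Cupper_closed_csq_sub1 z (Rlt_le _ _ Hz)) as (a & b & Ha & Hb & ->).
    unfold Cupper in Hz; simpl in Hz.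
    rewrite zeta_minus_csq_sub1 by assumption.
    split.
    + intros [Him Hre]; simpl in *; assert (a = 1) by nra; subst; nra.
    + intros [Him Hright]; apply csq_on_or_right_of_parabola in Hright; simpl in Him; nra.
  - intros w [Hnot_ray Hnot_right]; destruct (csq_surj w) as (p & q & -> & Hp & Hq).
    rewrite csq_on_or_right_of_parabola in Hnot_right; simpl in *.
    destruct (Rtotal_order (2 * p * q) 0) as [Him | [Him | Him]].
    + assert (Hp1 : p < 1) by (destruct (Rlt_le_dec p 1); nra).
      exists (csq_sub1 (1 - p) (- q)); split.
      * unfold Cupper; simpl; nra.
      * rewrite zeta_minus_csq_sub1 by nra; rewrite <- csq_opp; f_equal; ring.
    + assert (Hp0 : p = 0) by (destruct (Rle_lt_dec 0 (p * p - q * q)); nra).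
      assert (Hq0 : 0 < q) by (destruct (Hq (Req_le _ _ (eq_sym Him))); nra).
      exists (csq_sub1 1 q); split.
      * unfold Cupper; simpl; lra.
      * rewrite zeta_minus_csq_sub1 by lra; subst p; f_equal; ring.
    + assert (Hq0 : 0 < q) by nra.
      exists (csq_sub1 (p + 1) q); split.
      * unfold Cupper; simpl; nra.
      * rewrite zeta_minus_csq_sub1 by lra; f_equal; ring.
  - intros z1 z2 H1 H2.
    destruct (Cupper_closed_csq_sub1 z1 (Rlt_le _ _ H1)) as (a1 & b1 & Ha1 & Hb1 & ->).
    destruct (Cupper_closed_csq_sub1 z2 (Rlt_le _ _ H2)) as (a2 & b2 & Ha2 & Hb2 & ->).
    unfold Cupper in *; simpl in *.
    apply zeta_minus_csq_sub1_inj; auto; left; split; nra.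
Qed.

Lemma zeta_minus_real_pos :
  bij_onto zeta_minus (real_set (fun x => 0 < x)) (real_set (fun x => 0 < x)).
Proof.
  split; [| split].
  - intros z Hz; destruct (real_set_pair _ _ Hz) as (x & Hx & ->).
    rewrite real_ge_csq_sub1, zeta_minus_csq_sub1 by (auto using sqrt_pos; lra).
    assert (Hs : 1 < sqrt (x + 1)) by (rewrite <- sqrt_1 at 1; apply sqrt_lt_1_alt; lra).
    split; simpl; nra.
  - intros w Hw; destruct (real_set_pair _ _ Hw) as (x & Hx & ->).
    assert (Hs : 0 < sqrt x) by (apply sqrt_lt_R0; lra).
    pose proof (sqrt_sqrt x).
    exists (csq_sub1 (sqrt x + 1) 0); split.
    + split; simpl; nra.
    + rewrite zeta_minus_csq_sub1 by lra; unfold csq; f_equal; nra.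
  - intros z1 z2 H1 H2.
    destruct (real_set_pair _ _ H1) as (x1 & Hx1 & ->).
    destruct (real_set_pair _ _ H2) as (x2 & Hx2 & ->).
    rewrite !real_ge_csq_sub1 by lra.
    assert (1 <= sqrt (x1 + 1)) by (rewrite <- sqrt_1 at 1; apply sqrt_le_1_alt; lra).
    assert (1 <= sqrt (x2 + 1)) by (rewrite <- sqrt_1 at 1; apply sqrt_le_1_alt; lra).
    apply zeta_minus_csq_sub1_inj; auto using sqrt_pos; lra.
Qed.

Lemma zeta_minus_real_mid :
  bij_onto zeta_minus (real_set (fun x => -1 <= x <= 0)) (real_set (fun x => 0 <= x <= 1)).
Proof.
  split; [| split].
  - intros z Hz; destruct (real_set_pair _ _ Hz) as (x & Hx & ->).
    rewrite real_ge_csq_sub1, zeta_minus_csq_sub1 by (auto using sqrt_pos; lra).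
    assert (Hs : sqrt (x + 1) <= 1) by (rewrite <- sqrt_1 at 2; apply sqrt_le_1_alt; lra).
    pose proof (sqrt_pos (x + 1)).
    split; simpl; nra.
  - intros w Hw; destruct (real_set_pair _ _ Hw) as (x & Hx & ->).
    assert (Hs : sqrt x <= 1) by (rewrite <- sqrt_1; apply sqrt_le_1_alt; lra).
    pose proof (sqrt_pos x); pose proof (sqrt_sqrt x).
    exists (csq_sub1 (1 - sqrt x) 0); split.
    + split; simpl; nra.
    + rewrite zeta_minus_csq_sub1 by lra; unfold csq; f_equal; nra.
  - intros z1 z2 H1 H2.
    destruct (real_set_pair _ _ H1) as (x1 & Hx1 & ->).
    destruct (real_set_pair _ _ H2) as (x2 & Hx2 & ->).
    rewrite !real_ge_csq_sub1 by lra.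
    assert (sqrt (x1 + 1) <= 1) by (rewrite <- sqrt_1 at 2; apply sqrt_le_1_alt; lra).
    assert (sqrt (x2 + 1) <= 1) by (rewrite <- sqrt_1 at 2; apply sqrt_le_1_alt; lra).
    apply zeta_minus_csq_sub1_inj; auto using sqrt_pos; lra.
Qed.

Lemma zeta_minus_real_lt :
  bij_onto zeta_minus (real_set (fun x => x < -1)) (fun z => tau z /\ Clower z).
Proof.
  split; [| split].
  - intros z Hz; destruct (real_set_pair _ _ Hz) as (x & Hx & ->).
    rewrite real_lt_csq_sub1, zeta_minus_csq_sub1 by (auto using sqrt_pos; lra).
    assert (Ht : 0 < sqrt (- 1 - x)) by (apply sqrt_lt_R0; lra).
    rewrite <- csq_opp; split; [apply tau_csq; eexists; f_equal; ring |].
    unfold Clower; simpl; lra.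
  - intros w [Hw Hlow]; apply tau_csq in Hw; destruct Hw as [t ->].
    unfold Clower in Hlow; simpl in Hlow.
    exists (csq_sub1 0 (- t)); split.
    + split; simpl; nra.
    + rewrite zeta_minus_csq_sub1 by lra; rewrite <- csq_opp; f_equal; ring.
  - intros z1 z2 H1 H2.
    destruct (real_set_pair _ _ H1) as (x1 & Hx1 & ->).
    destruct (real_set_pair _ _ H2) as (x2 & Hx2 & ->).
    rewrite !real_lt_csq_sub1 by lra.
    assert (0 < sqrt (- 1 - x1)) by (apply sqrt_lt_R0; lra).
    assert (0 < sqrt (- 1 - x2)) by (apply sqrt_lt_R0; lra).
    apply zeta_minus_csq_sub1_inj; auto using sqrt_pos; lra.
Qed.

Lemma zeta_minus_preimage_neg A : Cupper_closed A ->
  (real_set (fun x => x < 0) (zeta_minus A) <-> exists t, 0 < t /\ A = (- t ^ 2, 2 * t)).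
Proof.
  intros HA; split.
  - destruct (Cupper_closed_csq_sub1 A HA) as (a & b & Ha & Hb & ->).
    rewrite zeta_minus_csq_sub1 by assumption.
    intros [Him Hre]; simpl in *.
    assert (Hb0 : 0 < b) by (pose proof (Rle_0_sqr (a - 1)); unfold Rsqr in *; nra).
    assert (a = 1) by nra; subst a.
    exists b; split; [assumption | unfold csq_sub1; f_equal; ring].
  - intros (t & Ht & ->).
    replace (- t ^ 2, 2 * t) with (csq_sub1 1 t) by (unfold csq_sub1; f_equal; ring).
    rewrite zeta_minus_csq_sub1 by lra.
    split; simpl; nra.
Qed.

Lemma Cmod_sub_le_Cmod_add a b c d : 0 <= a -> 0 <= b -> 0 <= c -> 0 <= d ->
  Cmod (Cminus (a, b) (c, d)) <= Cmod (Cplus (a, b) (c, d)).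
Proof.
  intros; unfold Cmod, Cminus, Cplus, Copp; simpl; apply sqrt_le_1_alt; nra.
Qed.

(* Both roots lie in the closed first quadrant, so [|s1 - s2| <= |s1 + s2|]
   and [|s1 - s2|^2 <= |s1 - s2| |s1 + s2| = |w1 - w2|]. *)
Lemma Csqrt_sub_le w1 w2 : 0 <= Im w1 -> 0 <= Im w2 ->
  Cmod (Cminus (Csqrt w1) (Csqrt w2)) <= sqrt (Cmod (Cminus w1 w2)).
Proof.
  intros H1 H2.
  destruct (Csqrt_spec w1) as (_ & Re1 & Im1); specialize (Im1 H1).
  destruct (Csqrt_spec w2) as (_ & Re2 & Im2); specialize (Im2 H2).
  pose proof (Csqrt_sqr w1) as E1; pose proof (Csqrt_sqr w2) as E2.
  destruct (Csqrt w1) as [p1 q1], (Csqrt w2) as [p2 q2]; simpl in *.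
  assert (Ew : Cminus w1 w2 = Cmult (Cminus (p1, q1) (p2, q2)) (Cplus (p1, q1) (p2, q2)))
    by (rewrite <- E1, <- E2; ring).
  rewrite Ew, Cmod_mult.
  pose proof (Cmod_sub_le_Cmod_add p1 q1 p2 q2 Re1 Im1 Re2 Im2).
  pose proof (Cmod_ge_0 (Cminus (p1, q1) (p2, q2))).
  rewrite <- (sqrt_square (Cmod (Cminus (p1, q1) (p2, q2)))) at 1 by assumption.
  apply sqrt_le_1_alt; nra.
Qed.

Lemma filterlim_within_of_sqrt_bound (f : CC -> CC) (P : CC -> Prop) z K :
  (forall y, P y -> Cmod (Cminus y z) < 1 ->
     Cmod (Cminus (f y) (f z)) <= K * sqrt (Cmod (Cminus y z))) ->
  filterlim f (within P (locally z)) (locally (f z)).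
Proof.
  intros Hbound; apply filterlim_locally; intros eps.
  set (k := Rabs K + 1).
  assert (Hk : 0 < k) by (pose proof (Rabs_pos K); unfold k; lra).
  assert (Hdelta : 0 < Rmin 1 ((eps / k) * (eps / k))).
  { apply Rmin_pos; [lra |].
    assert (0 < eps / k) by (apply Rdiv_lt_0_compat; [apply cond_pos | exact Hk]); nra. }
  apply (@locally_le_locally_norm C_AbsRing C_NormedModule).
  exists (mkposreal _ Hdelta); intros y Hy Py.
  apply (@norm_compat1 C_AbsRing C_NormedModule).
  change (Cmod (Cminus y z) < Rmin 1 (eps / k * (eps / k))) in Hy.
  change (Cmod (Cminus (f y) (f z)) < eps).
  set (d := Cmod (Cminus y z)) in *.
  assert (Hd1 : d < 1) by (eapply Rlt_le_trans; [exact Hy | apply Rmin_l]).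
  assert (Hd2 : d < eps / k * (eps / k)) by (eapply Rlt_le_trans; [exact Hy | apply Rmin_r]).
  assert (Hsqrt : sqrt d < eps / k).
  { rewrite <- (sqrt_square (eps / k)).
    - apply sqrt_lt_1_alt; split; [apply Cmod_ge_0 | exact Hd2].
    - apply Rlt_le, Rdiv_lt_0_compat; [apply cond_pos | exact Hk]. }
  specialize (Hbound y Py Hd1); fold d in Hbound.
  pose proof (sqrt_pos d); pose proof (Rle_abs K).
  assert (Hk_eps : k * (eps / k) = eps) by (field; lra).
  assert (K * sqrt d <= k * sqrt d) by (unfold k; nra).
  nra.
Qed.

Local Notation Cself := (AbsRing_NormedModule C_AbsRing).

Lemma is_derive_C_of_bound (f : CC -> CC) w l :
  (forall eps : posreal, exists delta : posreal, forall y,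
     Cmod (Cminus y w) < delta ->
     Cmod (Cminus (Cminus (f y) (f w)) (Cmult (Cminus y w) l)) <= eps * Cmod (Cminus y w)) ->
  @is_derive C_AbsRing Cself f w l.
Proof.
  intros Hbound; split.
  - apply is_linear_scal_l.
  - intros x Hx.
    apply (@is_filter_lim_locally_unique C_AbsRing Cself) in Hx.
    subst x; intros eps.
    apply (@locally_le_locally_norm C_AbsRing Cself).
    destruct (Hbound eps) as [delta Hdelta]; exists delta; intros y Hy; apply Hdelta, Hy.
Qed.

Lemma Cmod_ge_Re z : Re z <= Cmod z.
Proof. pose proof (re_le_Cmod z); pose proof (Rle_abs (Re z)); lra. Qed.

(* With [t = Csqrt y] and [s = Csqrt w], the remainder is [-(t - s)^2 / (2 s)],
   and [|y - w| = |t - s| |t + s| >= |t - s| Re s] controls [|t - s|]. *)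
Lemma Csqrt_is_derive w : 0 < Re (Csqrt w) ->
  @is_derive C_AbsRing Cself Csqrt w (Cinv (Cmult (RtoC 2) (Csqrt w))).
Proof.
  intros Hr; apply is_derive_C_of_bound; intros eps.
  pose proof (Csqrt_sqr w) as Es.
  set (s := Csqrt w) in *; set (r := Re s) in *.
  assert (Hs0 : s <> RtoC 0) by (intros E; unfold r in Hr; rewrite E in Hr; simpl in Hr; lra).
  assert (Hdelta : 0 < eps * (r * r * r))
    by (apply Rmult_lt_0_compat; [apply cond_pos | repeat apply Rmult_lt_0_compat; lra]).
  exists (mkposreal _ Hdelta); intros y Hy; change (Cmod (Cminus y w) < eps * (r * r * r)) in Hy.
  pose proof (Csqrt_sqr y) as Et; destruct (Csqrt_spec y) as (_ & Ht & _).
  set (t := Csqrt y) in *.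
  assert (Ediff : Cminus y w = Cmult (Cminus t s) (Cplus t s)) by (rewrite <- Et, <- Es; ring).
  assert (Erem : Cminus (Cminus t s) (Cmult (Cminus y w) (Cinv (Cmult (RtoC 2) s)))
                 = Cdiv (Copp (Cmult (Cminus t s) (Cminus t s))) (Cmult (RtoC 2) s)).
  { rewrite Ediff; field; exact Hs0. }
  rewrite Erem, Ediff.
  rewrite Cmod_div by (apply Cmult_neq_0; [intros E; injection E; lra | exact Hs0]).
  rewrite Cmod_opp, !Cmod_mult, Cmod_R, Rabs_pos_eq by lra.
  rewrite Ediff, Cmod_mult in Hy.
  set (m := Cmod (Cminus t s)) in *; set (M := Cmod (Cplus t s)) in *; set (c := Cmod s).
  assert (HM : r <= M) by (unfold M; pose proof (Cmod_ge_Re (Cplus t s)); simpl in *; unfold r; lra).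
  assert (Hc : r <= c) by apply Cmod_ge_Re.
  assert (Hm : 0 <= m) by apply Cmod_ge_0.
  pose proof (cond_pos eps) as Heps.
  assert (Hm_small : m <= eps * (r * r)) by nra.
  unfold Rdiv; apply (Rmult_le_reg_r (2 * c)); [lra |].
  rewrite Rmult_assoc, Rinv_l, Rmult_1_r by lra.
  assert (Hrr : r * r <= M * c) by nra.
  assert (Hmm : m * m <= m * (eps * (M * c)))
    by (apply Rmult_le_compat_l; [exact Hm | pose proof (Rmult_le_compat_l eps _ _ (Rlt_le _ _ Heps) Hrr); lra]).
  assert (0 <= m * (eps * (M * c))) by (repeat apply Rmult_le_pos; lra).
  nra.
Qed.

Section ShiftedCsqrt.

Variables (c : CC) (f : CC -> CC).
Hypothesis f_def : forall A, f A = Cplus (Cplus A (RtoC 2)) (Cmult c (Csqrt (Cplus A (RtoC 1)))).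

Lemma shifted_Csqrt_holomorphic : holomorphic_on Cupper f.
Proof.
  intros z Hz.
  assert (Hinner : forall k : CC, ex_derive (V := Cself) (fun A => Cplus A k) z).
  { intros k; apply (ex_derive_plus (V := Cself) (fun A => A) (fun _ => k));
      [apply ex_derive_id | apply ex_derive_const]. }
  assert (Hroot : ex_derive (V := Cself) (fun A => Csqrt (Cplus A (RtoC 1))) z).
  { apply (ex_derive_comp (V := Cself) Csqrt (fun A => Cplus A (RtoC 1))); [| apply Hinner].
    eexists; apply Csqrt_is_derive, Csqrt_Re_pos.
    unfold Cupper, Im in *; simpl; lra. }
  (* [holomorphic_on] is stated for [C_NormedModule]; [scal _ 1] transfers
     the derivative from [Cself]. *)
  apply (ex_derive_ext (V := C_NormedModule) (fun A => scal (V := C_NormedModule) (f A) (RtoC 1)));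
    [intros A; apply Cmult_1_r |].
  apply ex_derive_scal_l.
  apply (ex_derive_ext (V := Cself)
           (fun A => Cplus (Cplus A (RtoC 2)) (scal (V := Cself) (Csqrt (Cplus A (RtoC 1))) c)));
    [intros A; rewrite f_def; f_equal; apply Cmult_comm |].
  apply (ex_derive_plus (V := Cself)); [apply Hinner |].
  apply ex_derive_scal_l, Hroot.
Qed.

Lemma shifted_Csqrt_continuous : continuous_on_closed_upper f.
Proof.
  intros z Hz; apply (filterlim_within_of_sqrt_bound _ _ _ (1 + Cmod c)).
  intros y Hy Hd; unfold Cupper_closed in *.
  rewrite !f_def.
  replace (Cminus (Cplus (Cplus y (RtoC 2)) (Cmult c (Csqrt (Cplus y (RtoC 1)))))
                  (Cplus (Cplus z (RtoC 2)) (Cmult c (Csqrt (Cplus z (RtoC 1))))))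
    with (Cplus (Cminus y z)
                (Cmult c (Cminus (Csqrt (Cplus y (RtoC 1))) (Csqrt (Cplus z (RtoC 1))))))
    by ring.
  eapply Rle_trans; [apply Cmod_triangle |]; rewrite Cmod_mult.
  assert (Hroot : Cmod (Cminus (Csqrt (Cplus y (RtoC 1))) (Csqrt (Cplus z (RtoC 1))))
                  <= sqrt (Cmod (Cminus y z))).
  { replace (Cminus y z) with (Cminus (Cplus y (RtoC 1)) (Cplus z (RtoC 1))) by ring.
    apply Csqrt_sub_le; unfold Im in *; simpl; lra. }
  set (d := Cmod (Cminus y z)) in *.
  assert (Hd_sqrt : d <= sqrt d).
  { pose proof (sqrt_pos d); pose proof (sqrt_sqrt d (Cmod_ge_0 _)); nra. }
  pose proof (Cmod_ge_0 c).
  nra.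
Qed.

End ShiftedCsqrt.

Lemma zeta_plus_shifted A :
  zeta_plus A = Cplus (Cplus A (RtoC 2)) (Cmult (RtoC 2) (Csqrt (Cplus A (RtoC 1)))).
Proof. reflexivity. Qed.

Lemma zeta_minus_shifted A :
  zeta_minus A = Cplus (Cplus A (RtoC 2)) (Cmult (RtoC (-2)) (Csqrt (Cplus A (RtoC 1)))).
Proof.
  unfold zeta_minus; replace (RtoC (-2)) with (Copp (RtoC 2)) by (unfold RtoC, Copp; f_equal; simpl; ring).
  ring.
Qed.

Theorem lemma2p2 :
  (* (1) *)
  (conformal_onto zeta_plus Cupper D_plus /\
   continuous_on_closed_upper zeta_plus /\
   bij_onto zeta_plus (real_set (fun x => -1 <= x)) (real_set (fun x => 1 <= x)) /\
   bij_onto zeta_plus (real_set (fun x => x < -1)) (fun z => tau z /\ Cupper z))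
  /\
  (* (2) *)
  (conformal_onto zeta_minus Cupper D_minus /\
   continuous_on_closed_upper zeta_minus /\
   bij_onto zeta_minus (real_set (fun x => 0 < x)) (real_set (fun x => 0 < x)) /\
   bij_onto zeta_minus (real_set (fun x => -1 <= x <= 0))
                       (real_set (fun x => 0 <= x <= 1)) /\
   bij_onto zeta_minus (real_set (fun x => x < -1)) (fun z => tau z /\ Clower z) /\
   (forall A : CC, Cupper_closed A ->
      (real_set (fun x => x < 0) (zeta_minus A) <->
       exists t : R, 0 < t /\ A = (- t ^ 2, 2 * t)))).
Proof.
  split.
  - split; [split; [exact (shifted_Csqrt_holomorphic _ _ zeta_plus_shifted) | exact zeta_plus_upper] |].
    split; [exact (shifted_Csqrt_continuous _ _ zeta_plus_shifted) |].
    split; [exact zeta_plus_real_ge | exact zeta_plus_real_lt].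
  - split; [split; [exact (shifted_Csqrt_holomorphic _ _ zeta_minus_shifted) | exact zeta_minus_upper] |].
    split; [exact (shifted_Csqrt_continuous _ _ zeta_minus_shifted) |].
    split; [exact zeta_minus_real_pos |].
    split; [exact zeta_minus_real_mid |].
    split; [exact zeta_minus_real_lt | exact zeta_minus_preimage_neg].
Qed.
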